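(* Let $p$ and $p'$ be ordered quadruples of distinct points of $\partial\mathbf H^n_{\mathbb C}$. Then there exists an anti-holomorphic isometry of $\mathbf H^n_{\mathbb C}$ mapping $p_i$ to $p'_i$ for each $i$ if and only if the normalized Gram matrix of $p'$ is the complex conjugate of the normalized Gram matrix of $p$.
   Context: $\mathbb C^{n,1}$ is $\mathbb C^{n+1}$ with the Hermitian form $\langle Z,W\rangle=z_1\overline{w}_{n+1}+z_2\overline{w}_2+\cdots+z_n\overline{w}_n+z_{n+1}\overline{w}_1$; $\mathbf H^n_{\mathbb C}$ and $\partial\mathbf H^n_{\mathbb C}$ are the negative and null lines in $\mathbb P\mathbb C^n$. The full isometry group is generated by $\mathrm{PU}(n,1)$ and complex conjugation; anti-holomorphic isometries are those not in $\mathrm{PU}(n,1)$. For a quadruple with null lifts $P_i$, a Gram matrix is $(\langle P_i,P_j\rangle)$; the normalized Gram matrix of $p$ is the unique Gram matrix $G=(g_{ij})$ (for suitable lifts) with $g_{ii}=0$, $g_{12}=g_{23}=g_{34}=1$, $|g_{13}|=1$. *)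

From HB Require Import structures.
From mathcomp Require Import all_boot all_order all_algebra all_fingroup.
From mathcomp Require Import reals complex.
Set Implicit Arguments. Unset Strict Implicit. Unset Printing Implicit Defensive.
Import Order.TTheory GRing.Theory Num.Theory.
Local Open Scope ring_scope.
Local Open Scope complex_scope.

Section Defs.
Variable R : realType.
Notation C := R[i].
Variable n : nat.

(* Vectors of C^{n,1} = C^{n+1}; coordinate k (1-based in the paper) is index k-1. *)
Notation vec := 'cV[C]_(n.+1).

(* The Hermitian form <Z,W> = z_1 conj(w_{n+1}) + z_2 conj(w_2) + ... + z_n conj(w_n)
   + z_{n+1} conj(w_1): the transposition swaps the first and last coordinates. *)
Definition herm (Z W : vec) : C :=
  \sum_(i < n.+1) Z i 0 * (W (tperm ord0 ord_max i) 0)^*.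

(* a null vector: nonzero lift of a point of the boundary of complex hyperbolic space *)
Definition null_vec (Z : vec) : Prop := Z != 0 /\ herm Z Z = 0.

Definition same_line (Z W : vec) : Prop := exists c : C, c != 0 /\ W = c *: Z.

(* P : 'I_4 -> vec lifts an ordered quadruple of distinct points of the boundary *)
Definition bd_quadruple (P : 'I_4 -> vec) : Prop :=
  (forall i, null_vec (P i)) /\ (forall i j, i != j -> ~ same_line (P i) (P j)).

Definition unitary (A : 'M[C]_(n.+1)) : Prop :=
  forall Z W : vec, herm (A *m Z) (A *m W) = herm Z W.

Definition conjv (Z : vec) : vec := map_mx (fun z : C => z^*) Z.

(* Anti-holomorphic isometries of H^n_C are exactly the projectivisations of
   Z |-> A conj(Z) with A in U(n,1).  There is one mapping the point [P i] to [P' i]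
   for every i iff: *)
Definition antiholo_iso_maps (P P' : 'I_4 -> vec) : Prop :=
  exists A : 'M[C]_(n.+1), unitary A /\
    forall i, same_line (A *m conjv (P i)) (P' i).

Definition i0 : 'I_4 := @Ordinal 4 0 isT.
Definition i1 : 'I_4 := @Ordinal 4 1 isT.
Definition i2 : 'I_4 := @Ordinal 4 2 isT.
Definition i3 : 'I_4 := @Ordinal 4 3 isT.

Definition normalized_gram (P : 'I_4 -> vec) (G : 'M[C]_4) : Prop :=
  exists lam : 'I_4 -> C, (forall i, lam i != 0) /\
    (forall i j, G i j = herm (lam i *: P i) (lam j *: P j)) /\
    (forall i, G i i = 0) /\
    G i0 i1 = 1 /\ G i1 i2 = 1 /\ G i2 i3 = 1 /\ `|G i0 i2| = 1.

End Defs.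

Definition cconjmx (R : realType) (m k : nat) (G : 'M[R[i]]_(m, k)) : 'M[R[i]]_(m, k) :=
  map_mx (fun z : R[i] => z^*) G.

From HB Require Import structures.
From mathcomp Require Import all_boot all_order all_algebra all_fingroup.
From mathcomp Require Import reals complex.
From mathcomp Require Import ring.
Set Implicit Arguments. Unset Strict Implicit. Unset Printing Implicit Defensive.
Import Order.TTheory GRing.Theory Num.Theory.
Local Open Scope ring_scope.

(* If Z |-> A conj(Z), A in U(n,1), maps the points p_i to p'_i, then the
   normalized lifts satisfy lam'_i P'_i = m_i A conj(lam_i P_i), so that
   g'_ij = m_i conj(m_j) conj(g_ij); the normalizations g12 = g23 = g34 = 1 and
   |g13| = 1 force all m_i to equal one unimodular scalar, whence G' = conj(G).
   Conversely, if G' = conj(G) the vectors conj(lam_i P_i) and lam'_i P'_i have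
   the same Gram matrix and a Witt-type argument produces A: reflections
   Z |-> Z - c <Z,w> w move the hyperbolic pair of the first two vectors to the
   standard pair (e_1, e_(n+1)), and since the form is definite on the orthogonal
   complement of that pair, each further vector is then moved to its target by
   one more reflection fixing everything already placed. *)

Section HermitianForm.
Variable R : realType.
Variable n : nat.
Local Notation C := R[i].
Local Notation vec := 'cV[C]_(n.+1).
Local Notation s := (tperm (@ord0 n) ord_max).

Lemma hermDl (X Y W : vec) : herm (X + Y) W = herm X W + herm Y W.
Proof. by rewrite /herm -big_split; apply: eq_bigr => i _; rewrite mxE mulrDl. Qed.

Lemma hermDr (X Y W : vec) : herm W (X + Y) = herm W X + herm W Y.
Proof. by rewrite /herm -big_split; apply: eq_bigr => i _; rewrite mxE rmorphD mulrDr. Qed.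

Lemma hermZl a (X W : vec) : herm (a *: X) W = a * herm X W.
Proof. by rewrite /herm mulr_sumr; apply: eq_bigr => i _; rewrite mxE mulrA. Qed.

Lemma hermZr a (X W : vec) : herm W (a *: X) = a^* * herm W X.
Proof. by rewrite /herm mulr_sumr; apply: eq_bigr => i _; rewrite mxE rmorphM mulrCA. Qed.

Lemma hermBl (X Y W : vec) : herm (X - Y) W = herm X W - herm Y W.
Proof. by rewrite hermDl -scaleN1r hermZl mulN1r. Qed.

Lemma hermBr (X Y W : vec) : herm W (X - Y) = herm W X - herm W Y.
Proof. by rewrite hermDr -scaleN1r hermZr rmorphN rmorph1 mulN1r. Qed.

Lemma herm0l (W : vec) : herm 0 W = 0.
Proof. by rewrite -(scale0r 0) hermZl mul0r. Qed.

Lemma hermC (X W : vec) : (herm X W)^* = herm W X.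
Proof.
rewrite /herm rmorph_sum (reindex_inj (@perm_inj _ s)) /=.
by apply: eq_bigr => i _; rewrite rmorphM /= tpermK (@conjCK _ (W i 0)) mulrC.
Qed.

Lemma herm_delta (X : vec) j : herm X (delta_mx j 0) = X (s j) 0.
Proof.
rewrite /herm (bigD1 (s j)) //= big1 ?addr0 => [|i Hi].
  by rewrite mxE tpermK !eqxx conjC1 mulr1.
rewrite mxE andbT; case: eqP => [Hij|]; last by rewrite conjC0 mulr0.
by move: Hi; rewrite -Hij tpermK eqxx.
Qed.

Lemma conjv_scale a (X : vec) : conjv (a *: X) = a^* *: conjv X.
Proof. by apply/matrixP => i j; rewrite !mxE rmorphM. Qed.

Lemma herm_conjv (X W : vec) : herm (conjv X) (conjv W) = (herm X W)^*.
Proof. by rewrite /herm rmorph_sum; apply: eq_bigr => i _; rewrite !mxE rmorphM. Qed.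

Lemma herm_sub_self (X Y : vec) : herm X X = herm Y Y ->
  herm (X - Y) (X - Y) = herm X (X - Y) + (herm X (X - Y))^*.
Proof. by move=> hXY; rewrite hermC !hermBl !hermBr -hXY; ring. Qed.

Lemma herm_orth_sub (Z X Y : vec) : herm X Z = herm Y Z -> herm Z (X - Y) = 0.
Proof. by move=> h; rewrite -hermC hermBl h subrr conjC0. Qed.

(* The form is positive definite on the middle coordinates 2..n: this is where
   the signature (n,1) enters. *)
Lemma isotropic_mid_eq0 (w : vec) :
  w ord0 0 = 0 -> w ord_max 0 = 0 -> herm w w = 0 -> w = 0.
Proof.
move=> w0 wn ww0.
have wwE : herm w w = \sum_i w i 0 * (w i 0)^*.
  apply: eq_bigr => i _.
  have [->|i_ne0] := eqVneq i ord0; first by rewrite w0 !mul0r.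
  have [->|i_nen] := eqVneq i ord_max; first by rewrite wn !mul0r.
  by rewrite tpermD // eq_sym.
have := psumr_eq0P (P := xpredT) (fun i _ => mul_conjC_ge0 (w i 0)).
rewrite -wwE => /(_ ww0) wi0.
apply/matrixP => i j; rewrite (ord1 j) mxE.
by apply/eqP; rewrite -mul_conjC_eq0; apply/eqP; apply: wi0.
Qed.

Lemma unitary1 : unitary (1%:M : 'M[C]_(n.+1)).
Proof. by move=> Z W; rewrite !mul1mx. Qed.

Lemma unitary_mul (A B : 'M[C]_(n.+1)) : unitary A -> unitary B -> unitary (A *m B).
Proof. by move=> uA uB Z W; rewrite -!mulmxA uA uB. Qed.

Lemma unitary_inj (A : 'M[C]_(n.+1)) (Z : vec) : unitary A -> A *m Z = 0 -> Z = 0.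
Proof.
move=> uA AZ0; apply/matrixP => i j; rewrite (ord1 j) mxE.
by rewrite -(tpermK ord0 ord_max i) -herm_delta -uA AZ0 herm0l.
Qed.

Lemma unitary_left_inverse (A : 'M[C]_(n.+1)) : unitary A ->
  exists B, unitary B /\ forall Z : vec, B *m (A *m Z) = Z.
Proof.
move=> uA; have A_unit : A \in unitmx.
  rewrite -unitmx_tr -row_free_unit -kermx_eq0; apply/eqP/row_matrixP => i.
  rewrite row0; set u := row i _.
  have : A *m u^T = 0.
    by rewrite -[A]trmxK -trmx_mul /u -row_mul mulmx_ker row0 trmx0.
  by move/(unitary_inj uA)/(congr1 trmx); rewrite trmxK trmx0.
exists (invmx A); split => [Z W|Z]; last by rewrite mulmxA mulVmx // mul1mx.
by rewrite -uA !mulmxA !mulmxV // !mul1mx.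
Qed.

Lemma tperm_mx_unitary : unitary (tperm_mx (@ord0 n) ord_max : 'M[C]_(n.+1)).
Proof.
move=> Z W; rewrite -!xrowE /herm (reindex_inj (@perm_inj _ s)) /=.
by apply: eq_bigr => i _; rewrite !mxE !tpermK.
Qed.

Definition herm_row (w : vec) : 'rV[C]_(n.+1) := \row_j (w (s j) 0)^*.

Lemma herm_rowE (w Z : vec) : herm_row w *m Z = (herm Z w)%:M.
Proof.
apply/matrixP => i j; rewrite (ord1 i) (ord1 j) !mxE mulr1n.
by apply: eq_bigr => k _; rewrite mxE mulrC.
Qed.

Definition reflection (c : C) (w : vec) : 'M[C]_(n.+1) :=
  1%:M - c *: (w *m herm_row w).

Lemma reflectionE c w (Z : vec) : reflection c w *m Z = Z - (c * herm Z w) *: w.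
Proof.
by rewrite mulmxBl mul1mx -scalemxAl -mulmxA herm_rowE mul_mx_scalar scalerA.
Qed.

Lemma reflection_unitary (k : C) (w : vec) :
  k != 0 -> herm w w = k + k^* -> unitary (reflection k^-1 w).
Proof.
move=> k_neq0 wwE Z W; rewrite !reflectionE !hermBl !hermBr !hermZl !hermZr wwE.
rewrite -[herm w W]hermC rmorphM fmorphV /=.
have k'_neq0 : k^* != 0 by rewrite conjC_eq0.
by field; rewrite k_neq0 k'_neq0.
Qed.

Lemma reflection_ex (X Y : vec) :
  herm X X = herm Y Y -> (herm X (X - Y) = 0 -> X = Y) ->
  exists U, [/\ unitary U, U *m X = Y &
                forall Z : vec, herm Z (X - Y) = 0 -> U *m Z = Z].
Proof.
move=> XY_norm XY_deg; have [k0|k_neq0] := eqVneq (herm X (X - Y)) 0.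
  by exists 1%:M; rewrite mul1mx XY_deg //; split=> // [|Z _];
    [exact: unitary1 | exact: mul1mx].
exists (reflection (herm X (X - Y))^-1 (X - Y)); split.
- by apply: reflection_unitary; rewrite // herm_sub_self.
- by rewrite reflectionE mulVf // scale1r opprB addrC subrK.
- by move=> Z Z_orth; rewrite reflectionE Z_orth mulr0 scale0r subr0.
Qed.

End HermitianForm.

Section StandardFrame.
Variable R : realType.
Variable n : nat.
Hypothesis n_gt0 : (0 < n)%N.
Local Notation C := R[i].
Local Notation vec := 'cV[C]_(n.+1).

Definition e0 : vec := delta_mx ord0 0.
Definition en : vec := delta_mx ord_max 0.

Lemma herm_e0 (Z : vec) : herm Z e0 = Z ord_max 0.
Proof. by rewrite herm_delta tpermL. Qed.

Lemma herm_en (Z : vec) : herm Z en = Z ord0 0.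
Proof. by rewrite herm_delta tpermR. Qed.

Lemma ord0_neq_max : (ord0 : 'I_n.+1) != ord_max.
Proof. by rewrite -val_eqE /= neq_ltn n_gt0. Qed.

Lemma e0_max : e0 ord_max 0 = 0.
Proof. by rewrite mxE eq_sym (negbTE ord0_neq_max). Qed.

Lemma en_0 : en ord0 0 = 0.
Proof. by rewrite mxE (negbTE ord0_neq_max). Qed.

Lemma en_e0 : herm en e0 = 1.
Proof. by rewrite herm_e0 mxE !eqxx. Qed.

Lemma e0_isotropic : herm e0 e0 = 0.
Proof. by rewrite herm_e0 e0_max. Qed.

Lemma en_isotropic : herm en en = 0.
Proof. by rewrite herm_en en_0. Qed.

Lemma reflection_frame_ex (X Y : vec) :
  herm X X = herm Y Y -> herm X e0 = herm Y e0 -> herm X en = herm Y en ->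
  exists U, [/\ unitary U, U *m X = Y &
                forall Z : vec, herm Z (X - Y) = 0 -> U *m Z = Z].
Proof.
move=> XY_norm XY_e0 XY_en; apply: reflection_ex => // XY_deg.
apply/eqP; rewrite -subr_eq0; apply/eqP; apply: isotropic_mid_eq0.
- by rewrite -herm_en hermBl XY_en subrr.
- by rewrite -herm_e0 hermBl XY_e0 subrr.
- by rewrite herm_sub_self // XY_deg conjC0 addr0.
Qed.

Lemma hyperbolic_pair_frame (u v : vec) :
  herm u u = 0 -> herm v v = 0 -> herm u v = 1 ->
  exists T, [/\ unitary T, T *m u = e0 & T *m v = en].
Proof.
move=> uu vv uv.
(* A reflection can move u to e0 only if <u,e0> = u_(n+1) is nonzero. *)
have [T1 [uT1 T1u_max]] : exists T1, unitary T1 /\ (T1 *m u) ord_max 0 != 0.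
  have [u_max0|u_max] := eqVneq (u ord_max 0) 0; last first.
    by exists 1%:M; rewrite mul1mx; split=> //; exact: unitary1.
  exists (tperm_mx ord0 ord_max); split; first exact: tperm_mx_unitary.
  rewrite -xrowE mxE tpermR; apply/eqP => u_00.
  by move: uv; rewrite (isotropic_mid_eq0 u_00 u_max0 uu) herm0l => /esym/eqP;
    rewrite oner_eq0.
set u1 := T1 *m u; set v1 := T1 *m v.
have [T2 [uT2 T2u1 _]] : exists T2, [/\ unitary T2, T2 *m u1 = e0 &
    forall Z : vec, herm Z (u1 - e0) = 0 -> T2 *m Z = Z].
  apply: reflection_ex; first by rewrite uT1 uu e0_isotropic.
  rewrite hermBr uT1 uu herm_e0 sub0r => /eqP; rewrite oppr_eq0 => /eqP u1_max0.
  by move: T1u_max; rewrite u1_max0 eqxx.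
set v2 := T2 *m v1.
have vv2 : herm v2 v2 = 0 by rewrite uT2 uT1.
have v2_e0 : herm v2 e0 = 1.
  by rewrite -[herm _ _]conjCK hermC -T2u1 uT2 uT1 uv conjC1.
have [T3 [uT3 T3v2 T3_fix]] : exists T3, [/\ unitary T3, T3 *m v2 = en &
    forall Z : vec, herm Z (v2 - en) = 0 -> T3 *m Z = Z].
  apply: reflection_ex; first by rewrite vv2 en_isotropic.
  move=> v2_deg; have v2_en : herm v2 en = 0.
    by move: v2_deg; rewrite hermBr vv2 sub0r => /eqP; rewrite oppr_eq0 => /eqP.
  apply/eqP; rewrite -subr_eq0; apply/eqP; apply: isotropic_mid_eq0.
  - by rewrite -herm_en hermBl v2_en en_isotropic subr0.
  - by rewrite -herm_e0 hermBl v2_e0 en_e0 subrr.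
  - by rewrite herm_sub_self ?en_isotropic // v2_deg conjC0 addr0.
exists (T3 *m T2 *m T1); split.
- by apply: unitary_mul => //; apply: unitary_mul.
- by rewrite -!mulmxA -/u1 T2u1 T3_fix //; apply: herm_orth_sub; rewrite v2_e0 en_e0.
- by rewrite -!mulmxA -/v1 -/v2.
Qed.

Lemma unitary_extension_fixing_frame (I : eqType) (X Y : I -> vec) (r : seq I) :
  (forall i j, herm (X i) (X j) = herm (Y i) (Y j)) ->
  (forall i, herm (X i) e0 = herm (Y i) e0) ->
  (forall i, herm (X i) en = herm (Y i) en) ->
  exists U, [/\ unitary U, U *m e0 = e0, U *m en = en &
                {in r, forall i, U *m X i = Y i}].
Proof.
move=> XY XY_e0 XY_en; elim: r => [|i r [U [uU Ue0 Uen UXY]]].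
  by exists 1%:M; rewrite !mul1mx; split=> //; exact: unitary1.
have UX_Y j : j \in r -> herm (U *m X i) (Y j) = herm (Y i) (Y j).
  by move=> jr; rewrite -[in LHS](UXY j jr) uU XY.
have [V [uV VUX V_fix]] : exists V, [/\ unitary V, V *m (U *m X i) = Y i &
    forall Z : vec, herm Z (U *m X i - Y i) = 0 -> V *m Z = Z].
  apply: reflection_frame_ex; first by rewrite uU XY.
  - by rewrite -{1}Ue0 uU XY_e0.
  - by rewrite -{1}Uen uU XY_en.
have V_fix_ortho Z : herm (U *m X i) Z = herm (Y i) Z -> V *m Z = Z.
  by move=> ?; apply: V_fix; apply: herm_orth_sub.
exists (V *m U); split; rewrite -?mulmxA.
- exact: unitary_mul.
- by rewrite Ue0 V_fix_ortho // -{1}Ue0 uU XY_e0.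
- by rewrite Uen V_fix_ortho // -{1}Uen uU XY_en.
- move=> j; rewrite inE -mulmxA; case/predU1P => [-> //|jr].
  by rewrite (UXY j jr) V_fix_ortho // UX_Y.
Qed.

Lemma witt_extension (I : finType) (X Y : I -> vec) (a b : I) :
  (forall i j, herm (X i) (X j) = herm (Y i) (Y j)) ->
  herm (X a) (X a) = 0 -> herm (X b) (X b) = 0 -> herm (X a) (X b) = 1 ->
  exists A, unitary A /\ forall i, A *m X i = Y i.
Proof.
move=> XY aa bb ab.
have [TX [uTX TXa TXb]] := hyperbolic_pair_frame aa bb ab.
have [TY [uTY TYa TYb]] : exists T, [/\ unitary T, T *m Y a = e0 & T *m Y b = en].
  by apply: hyperbolic_pair_frame; rewrite -XY.
have [BY [uBY BY_TY]] := unitary_left_inverse uTY.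
pose X' i := TX *m X i; pose Y' i := TY *m Y i.
have X'Y' i j : herm (X' i) (X' j) = herm (Y' i) (Y' j) by rewrite uTX uTY.
have X'Y'_e0 i : herm (X' i) e0 = herm (Y' i) e0.
  by rewrite -[in LHS]TXa -[in RHS]TYa; exact: X'Y'.
have X'Y'_en i : herm (X' i) en = herm (Y' i) en.
  by rewrite -[in LHS]TXb -[in RHS]TYb; exact: X'Y'.
have [U [uU _ _ UX'Y']] :=
  unitary_extension_fixing_frame (enum I) X'Y' X'Y'_e0 X'Y'_en.
exists (BY *m U *m TX); split.
  by apply: unitary_mul => //; apply: unitary_mul.
by move=> i; rewrite -!mulmxA UX'Y' ?mem_enum // BY_TY.
Qed.
End StandardFrame.

Section Quadruples.
Variable R : realType.
Variable n : nat.
Local Notation C := R[i].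
Local Notation vec := 'cV[C]_(n.+1).

Lemma ord4_ind (P : 'I_4 -> Prop) : P i0 -> P i1 -> P i2 -> P i3 -> forall i, P i.
Proof.
move=> P0 P1 P2 P3 [[|[|[|[|k]]]] k_lt4] //.
- by rewrite (_ : Ordinal k_lt4 = i0) //; apply: val_inj.
- by rewrite (_ : Ordinal k_lt4 = i1) //; apply: val_inj.
- by rewrite (_ : Ordinal k_lt4 = i2) //; apply: val_inj.
- by rewrite (_ : Ordinal k_lt4 = i3) //; apply: val_inj.
Qed.

Lemma same_line_scale (Z W : vec) (a b : C) :
  a != 0 -> b != 0 -> a *: Z = b *: W -> same_line Z W.
Proof.
move=> a_neq0 b_neq0 abZW; exists (a / b); split; first by rewrite mulf_neq0 ?invr_eq0.
by rewrite mulrC -scalerA abZW scalerA mulVf ?scale1r.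
Qed.

Lemma same_line_lift (A : 'M[C]_(n.+1)) (Z W : vec) (a b : C) : a != 0 ->
  same_line (A *m conjv Z) W -> exists m, b *: W = m *: (A *m conjv (a *: Z)).
Proof.
move=> a_neq0 [c [_ ->]]; exists (b * c / a^*).
rewrite conjv_scale -scalemxAr !scalerA; congr (_ *: _).
have a'_neq0 : a^* != 0 by rewrite conjC_eq0.
by field.
Qed.

Lemma herm_antiholo (A : 'M[C]_(n.+1)) (a b : C) (Z W : vec) : unitary A ->
  herm (a *: (A *m conjv Z)) (b *: (A *m conjv W)) = a * b^* * (herm Z W)^*.
Proof. by move=> uA; rewrite hermZl hermZr uA herm_conjv mulrA. Qed.

Lemma chain_multipliers (m : 'I_4 -> C) :
  m i0 * (m i1)^* = 1 -> m i1 * (m i2)^* = 1 -> m i2 * (m i3)^* = 1 ->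
  `|m i0 * (m i2)^*| = 1 -> forall i j, m i * (m j)^* = 1.
Proof.
move=> m01 m12 m23 m02.
have m1'_neq0 : (m i1)^* != 0.
  by apply/eqP => m1'0; move: m01; rewrite m1'0 mulr0 => /eqP; rewrite eq_sym oner_eq0.
have m20 : m i2 = m i0.
  by apply: (mulIf m1'_neq0); rewrite m01 mulrC -[m i2]conjCK -rmorphM m12 rmorph1.
have m00 : m i0 * (m i0)^* = 1.
  by move: m02; rewrite m20 normrM norm_conjC -expr2 normCK.
have m0_neq0 : m i0 != 0.
  by apply/eqP => m0_0; move: m00; rewrite m0_0 mul0r => /eqP; rewrite eq_sym oner_eq0.
have m_eq_m0 k : m i0 * (m k)^* = 1 -> m k = m i0.
  move=> m0k; apply: (can_inj (@conjCK _)); apply: (mulfI m0_neq0).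
  by rewrite m0k m00.
have m_const : forall i, m i = m i0.
  by apply: ord4_ind => //; apply: m_eq_m0; last rewrite -{1}m20.
by move=> i j; rewrite !m_const.
Qed.

Lemma antiholo_iso_gram_conj (P P' : 'I_4 -> vec) (G G' : 'M[C]_4) :
  normalized_gram P G -> normalized_gram P' G' ->
  antiholo_iso_maps P P' -> G' = cconjmx G.
Proof.
move=> [lam [lam_neq0 [GE [_ [G01 [G12 [G23 G02]]]]]]].
move=> [lam' [_ [G'E [_ [G'01 [G'12 [G'23 G'02]]]]]]] [A [uA AP]].
have [m Pm] : exists m : 'I_4 -> C,
    forall i, lam' i *: P' i = m i *: (A *m conjv (lam i *: P i)).
  exact: fin_all_exists (fun i => same_line_lift (lam' i) (lam_neq0 i) (AP i)).
have G'm i j : G' i j = m i * (m j)^* * (G i j)^*.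
  by rewrite G'E !Pm herm_antiholo // GE.
have m_unit : forall i j, m i * (m j)^* = 1.
  apply: chain_multipliers.
  - by rewrite -G'01 G'm G01 conjC1 mulr1.
  - by rewrite -G'12 G'm G12 conjC1 mulr1.
  - by rewrite -G'23 G'm G23 conjC1 mulr1.
  - by rewrite -G'02 G'm [RHS]normrM norm_conjC G02 mulr1.
by apply/matrixP => i j; rewrite G'm m_unit mul1r mxE.
Qed.

Lemma gram_conj_antiholo_iso (P P' : 'I_4 -> vec) (G G' : 'M[C]_4) :
  (0 < n)%N -> normalized_gram P G -> normalized_gram P' G' ->
  G' = cconjmx G -> antiholo_iso_maps P P'.
Proof.
move=> n_gt0 [lam [lam_neq0 [GE [G_diag [G01 _]]]]] [lam' [lam'_neq0 [G'E _]]] G'G.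
have Xgram i j : herm (conjv (lam i *: P i)) (conjv (lam j *: P j)) = (G i j)^*.
  by rewrite herm_conjv GE.
have [A [uA AX]] : exists A : 'M[C]_(n.+1), unitary A /\
    forall i, A *m conjv (lam i *: P i) = lam' i *: P' i.
  apply: (witt_extension n_gt0 (a := i0) (b := i1)).
  - by move=> i j; rewrite Xgram -G'E G'G mxE.
  - by rewrite Xgram G_diag conjC0.
  - by rewrite Xgram G_diag conjC0.
  - by rewrite Xgram G01 conjC1.
exists A; split=> // i; apply: (@same_line_scale _ _ (lam i)^* (lam' i)).
- by rewrite conjC_eq0.
- exact: lam'_neq0.
- by rewrite scalemxAr -conjv_scale AX.
Qed.

End Quadruples.

Unset Implicit Arguments.

Theorem corollary2p2 (R : realType) (n : nat) (hn : (0 < n)%N)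
    (P P' : 'I_4 -> 'cV[R[i]]_(n.+1)) (G G' : 'M[R[i]]_4) :
  bd_quadruple P -> bd_quadruple P' ->
  normalized_gram P G -> normalized_gram P' G' ->
  (antiholo_iso_maps P P' <-> G' = cconjmx G).
Proof.
move=> _ _ hG hG'; split; first exact: antiholo_iso_gram_conj.
exact: gram_conj_antiholo_iso.
Qed.
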